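(* Let $V$ be a Banach space densely and continuously embedded in a Banach space $E$, $P$ a metric space, and for each $\mu\in P$ let $\{A^{(\mu)}(t)\}_{t\geq0}$ be a family of linear operators in $E$ with $V\subset D(A^{(\mu)}(t))$, $A^{(\mu)}(t)\in\mathcal L(V,E)$ and $t\mapsto A^{(\mu)}(t)\in\mathcal L(V,E)$ continuous. For each $\mu\in P$ let $\widehat A^{(\mu)}$ be a linear operator in $E$ with $V\subset D(\widehat A^{(\mu)})$, and assume $\lim_{T\to+\infty,\ \nu\to\mu}\frac1T\int_0^T\|A^{(\nu)}(t+h)-\widehat A^{(\mu)}\|_{\mathcal L(V,E)}\,dt=0$ uniformly with respect to $h\geq0$, for every $\mu\in P$. Set $A^{(\nu,\lambda)}(r):=A^{(\nu)}(r/\lambda)$ for $\lambda>0$. Then for any $\mu\in P$ and $t\geq s\geq0$, $\lim_{\lambda\to0^+,\ \nu\to\mu}\int_s^t\|A^{(\nu,\lambda)}(r)-\widehat A^{(\mu)}\|_{\mathcal L(V,E)}\,dr=0$.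
   Context: $\|\cdot\|_{\mathcal L(V,E)}$ denotes the operator norm of the restriction to $V$ of the operator, as a map from $V$ to $E$. *)

From HB Require Import structures.
From mathcomp Require Import all_boot all_order all_algebra.
From mathcomp Require Import all_classical all_reals all_analysis.
Set Implicit Arguments. Unset Strict Implicit. Unset Printing Implicit Defensive.
Import Order.TTheory GRing.Theory Num.Theory.
Import numFieldNormedType.Exports.
Local Open Scope classical_set_scope.
Local Open Scope ring_scope.

(* Operator norm ||f||_{L(V,E)} of a map f : V -> E (the restriction to V of
   an operator in E), as an extended real: sup_{||x||_V <= 1} ||f x||_E.
   It is +oo when f is unbounded on V. *)
Definition opnorm (R : realType) (V E : normedModType R) (f : V -> E) : \bar R :=
  ereal_sup [set (`|f x|)%:E | x in [set x : V | `|x| <= 1]].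

Definition opdiff (R : realType) (V E : normedModType R) (f g : V -> E) : V -> E :=
  fun x => f x - g x.

Definition dense_cont_embedding (R : realType) (V E : normedModType R)
  (j : {linear V -> E}) : Prop :=
  injective j /\ continuous j /\ closure (range j) = setT.

From HB Require Import structures.
From mathcomp Require Import all_boot all_order all_algebra.
From mathcomp Require Import all_classical all_reals all_analysis.
From mathcomp Require Import lra.
Import Order.TTheory GRing.Theory Num.Theory.
Import numFieldNormedType.Exports.
Local Open Scope classical_set_scope.
Local Open Scope ring_scope.

(* With T := (t - s) / lambda and h := s / lambda, the substitution r = lambda x + s gives
     \int_s^t ||A^(nu)(r / lambda) - Ahat^(mu)|| dr
       = (t - s) * (1 / T) \int_0^T ||A^(nu)(x + h) - Ahat^(mu)|| dx,
   and T -> +oo as lambda -> 0+, so the averaged hypothesis, being uniform in h, makes the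
   right-hand side small.  Continuity of t |-> A^(nu)(t) makes the integrand continuous, as the
   substitution theorem requires, and the averaged hypothesis at nu = mu forces Ahat^(mu) to be
   bounded, so the integrand is finite. *)

Section opnorm_theory.
Context {R : realType} {V E : normedModType R}.
Implicit Types f g h : V -> E.

Lemma opnorm_ub f {x} : `|x| <= 1 -> ((`|f x|)%:E <= opnorm f)%E.
Proof. by move=> x1; apply: ereal_sup_ubound; exists x. Qed.

Lemma opnorm_ge0 f : (0 <= opnorm f)%E.
Proof. by apply: le_trans (@opnorm_ub f 0 _); rewrite ?normr0 ?lee_fin ?ler01. Qed.

Lemma opnorm_le_add f g h : (forall x, `|f x| <= `|g x| + `|h x|) ->
  (opnorm f <= opnorm g + opnorm h)%E.
Proof.
move=> fgh; apply: ge_ereal_sup => _ [x x1 <-].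
apply: le_trans _ (leeD (opnorm_ub g x1) (opnorm_ub h x1)).
by rewrite -EFinD lee_fin.
Qed.

Lemma opnorm_opdiffC f g : opnorm (opdiff f g) = opnorm (opdiff g f).
Proof.
by apply/le_anti/andP; split; apply: ge_ereal_sup => _ [x x1 <-];
  rewrite /opdiff -normrN opprB; apply: (opnorm_ub (opdiff _ _)).
Qed.

Lemma opnorm_opdiff_le f g : (opnorm (opdiff f g) <= opnorm f + opnorm g)%E.
Proof. by apply: opnorm_le_add => x; apply: ler_normB. Qed.

Lemma opnorm_le_opdiff f g : (opnorm g <= opnorm (opdiff f g) + opnorm f)%E.
Proof.
apply: opnorm_le_add => x; rewrite /opdiff addrC.
by rewrite -{1}[g x](subKr (f x)); apply: ler_normB.
Qed.

Lemma opnorm_opdiff_triangle f g h :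
  (opnorm (opdiff f h) <= opnorm (opdiff f g) + opnorm (opdiff g h))%E.
Proof. by apply: opnorm_le_add => x; apply: ler_distD. Qed.

Lemma opnorm_opdiff_dist f g h :
  opnorm (opdiff f h) \is a fin_num -> opnorm (opdiff g h) \is a fin_num ->
  ((`|fine (opnorm (opdiff f h)) - fine (opnorm (opdiff g h))|)%:E
     <= opnorm (opdiff f g))%E.
Proof.
move=> /fineK fhE /fineK ghE.
have [/eqP->|fg_fin] := boolP (opnorm (opdiff f g) == +oo%E); first exact: leey.
have /fineK fgE : opnorm (opdiff f g) \is a fin_num.
  by rewrite ge0_fin_numE ?opnorm_ge0 // lt_neqAle fg_fin leey.
have := opnorm_opdiff_triangle f g h; have := opnorm_opdiff_triangle g f h.
rewrite [opnorm (opdiff g f)]opnorm_opdiffC -fgE -fhE -ghE -!EFinD !lee_fin => ? ?.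
by rewrite ler_norml; apply/andP; split; lra.
Qed.

Lemma opnorm_opdiff_pinfty f g : (opnorm f < +oo)%E -> opnorm g = +oo%E ->
  opnorm (opdiff f g) = +oo%E.
Proof.
move=> f_fin g_oo; have := opnorm_le_opdiff f g; rewrite g_oo.
move: f_fin (opnorm_ge0 f); case: (opnorm f) => [a| |] //= _ _.
by case: (opnorm (opdiff f g)) => [r| |] //=; rewrite -EFinD leye_eq.
Qed.

End opnorm_theory.

Lemma ler_dist_max0 (R : realDomainType) (x y : R) :
  `|Num.max y 0 - Num.max x 0| <= `|y - x|.
Proof.
rewrite !maxEle; case: (leP y 0) => hy; case: (leP x 0) => hx.
- by rewrite subrr normr0.
- by rewrite sub0r normrN gtr0_norm // ler0_norm; lra.
- by rewrite subr0 gtr0_norm // ger0_norm; lra.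
- by [].
Qed.

Lemma continuous_comp_max0 (R : realType) (phi : R -> R) :
  (forall x, 0 <= x -> forall e, 0 < e -> exists2 d, 0 < d &
     forall y, 0 <= y -> `|y - x| < d -> `|phi y - phi x| < e) ->
  continuous (fun u : R => phi (Num.max u 0)).
Proof.
move=> phi_cont x; apply/cvgrPdist_lt => e e0.
have max0_ge0 (u : R) : 0 <= Num.max u 0 by rewrite le_max lexx orbT.
have [d d0 close] := phi_cont _ (max0_ge0 x) e e0.
near=> y; rewrite distrC; apply: close; first exact: max0_ge0.
apply: le_lt_trans (@ler_dist_max0 R x y) _; rewrite distrC.
by near: y; exists d => //= z; rewrite /ball /= distrC.
Unshelve. all: end_near.
Qed.

Lemma ge0_integral_itv_affine (R : realType) (G : R -> R) (s t lam : R) :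
  continuous G -> (forall r, 0 <= G r) -> 0 < lam -> s <= t ->
  (\int[lebesgue_measure]_(r in `[s, t]) (G r)%:E =
   lam%:E * \int[lebesgue_measure]_(x in `[0%R, ((t - s) / lam)%R]) (G (lam * x + s)%R)%:E)%E.
Proof.
move=> G_cont G_ge0 lam_gt0 st.
pose F x := lam * x + s; pose T := (t - s) / lam.
have T_ge0 : 0 <= T by rewrite divr_ge0 ?subr_ge0 // ltW.
have F0 : F 0 = s by rewrite /F mulr0 add0r.
have FT : F T = t by rewrite /F /T mulrC divfK ?gt_eqF // subrK.
have dF : F^`()%classic = cst lam.
  apply/funext => x; rewrite derive1E /F deriveD // deriveM // derive_id derive_cst.
  by rewrite scaler0 !addr0 [X in _ + X]derive_cst addr0 /cst; exact: mulr1.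
have F_cont : continuous F.
  by move=> x; apply: cvgD; [apply: cvgM; [exact: cvg_cst|exact: cvg_id]|exact: cvg_cst].
have := @integration_by_substitution_increasing R F G 0 T T_ge0.
rewrite F0 FT dF => ->; last first.
- exact: continuous_subspaceT.
- split; first by move=> x _; rewrite /F; apply: derivableD => //; apply: derivableM.
  + exact: cvg_at_right_filter (F_cont 0).
  + exact: cvg_at_left_filter (F_cont T).
- exact: is_cvg_cst.
- exact: is_cvg_cst.
- by move=> x _; exact: cvg_cst.
- by move=> x y _ _ xy; rewrite /F ltrD2r ltr_pM2l.
rewrite -ge0_integralZl_EFin ?ltW //; last first.
  apply/measurable_realfun.measurable_EFinP; apply: measurable_funTS.
  apply: measurable_realfun.continuous_measurable_fun => x.
  exact: continuous_comp (F_cont x) (G_cont (F x)).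
- by move=> x _; rewrite lee_fin.
- by apply: eq_integral => x _; rewrite /= -EFinM mulrC.
Qed.

Section rescaled_average.
Context {R : realType} {V E : normedModType R} {P : topologicalType}.
Context {A : P -> R -> {linear V -> E}} {Ahat : P -> {linear V -> E}}.

Let dev mu nu u := opnorm (opdiff (A nu u : V -> E) (Ahat mu : V -> E)).

Hypothesis A_bounded : forall mu t, 0 <= t -> (opnorm (A mu t : V -> E) < +oo)%E.
Hypothesis A_continuous : forall mu t, 0 <= t -> forall eps : R, 0 < eps ->
  exists2 delta : R, 0 < delta & forall t', 0 <= t' -> `|t' - t| < delta ->
    (opnorm (opdiff (A mu t') (A mu t)) < eps%:E)%E.
Hypothesis A_average : forall mu : P, forall eps : R, 0 < eps ->
  exists T0 : R, exists2 U : set P, nbhs mu U &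
    forall T, T0 < T -> forall nu, U nu -> forall h : R, 0 <= h ->
      ((T^-1)%:E * \int[lebesgue_measure]_(t in `[0%R, T]) dev mu nu (t + h)%R < eps%:E)%E.

Lemma Ahat_bounded mu : (opnorm (Ahat mu : V -> E) < +oo)%E.
Proof.
rewrite ltey; apply/negP => /eqP Ahat_oo.
have [T0 [U Umu avg]] := A_average mu 1 ltr01.
pose T := `|T0| + 1.
have T_gt0 : 0 < T by rewrite /T; have := normr_ge0 T0; lra.
have T0T : T0 < T by rewrite /T; have := ler_norm T0; lra.
have := avg T T0T mu (nbhs_singleton Umu) 0 (lexx 0).
rewrite (eq_integral (cst +oo%E)) => [|u]; last first.
  rewrite inE /= in_itv /= addr0 => /andP[u0 _].
  exact: opnorm_opdiff_pinfty (A_bounded mu u u0) Ahat_oo.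
have leb_T : (lebesgue_measure `[0%R, T]%classic = T%:E)%E.
  by rewrite lebesgue_measure_itv /= lte_fin T_gt0 /= oppr0 adde0.
rewrite integral_cst // -[X in (+oo * X)%E]/(lebesgue_measure `[0%R, T]%classic) leb_T.
by rewrite gt0_mulye ?lte_fin // gt0_muley ?lte_fin ?invr_gt0.
Qed.

Lemma dev_fin_num mu nu u : 0 <= u -> dev mu nu u \is a fin_num.
Proof.
move=> u0; rewrite ge0_fin_numE ?opnorm_ge0 //.
rewrite /dev; apply: le_lt_trans (opnorm_opdiff_le _ _) _.
exact: lte_add_pinfty (A_bounded nu u u0) (Ahat_bounded mu).
Qed.

Lemma continuous_dev_max0 mu nu : continuous (fun u : R => fine (dev mu nu (Num.max u 0))).
Proof.
apply: (@continuous_comp_max0 _ (fun u => fine (dev mu nu u))) => x x0 e e0.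
have [d d0 close] := A_continuous nu x x0 e e0.
exists d => // y y0 yx; rewrite -lte_fin.
by apply: le_lt_trans (close y y0 yx); apply: opnorm_opdiff_dist; apply: dev_fin_num.
Qed.

Lemma integral_dev_rescaled mu nu (s t lam : R) : 0 <= s -> s < t -> 0 < lam ->
  (\int[lebesgue_measure]_(r in `[s, t]) dev mu nu (r / lam)%R =
   (t - s)%:E * (((t - s) / lam)^-1%:E *
     \int[lebesgue_measure]_(x in `[0%R, ((t - s) / lam)%R]) dev mu nu (x + s / lam)%R))%E.
Proof.
move=> s0 st lam_gt0.
pose g u := fine (dev mu nu (Num.max u 0)).
have devE u : 0 <= u -> dev mu nu u = (g u)%:E.
  by move=> u0; rewrite /g max_l // fineK // dev_fin_num.
transitivity (\int[lebesgue_measure]_(r in `[s, t]) (g (r / lam))%:E)%E.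
  apply: eq_integral => r; rewrite inE /= in_itv /= => /andP[sr _].
  by rewrite devE // divr_ge0 ?(le_trans s0 sr) ?ltW.
rewrite (@ge0_integral_itv_affine _ (fun r => g (r / lam)) s t lam) ?ltW //; last 2 first.
- move=> x; have div_cont : {for x, continuous (fun r : R => r / lam)}.
    by apply: cvgM; [exact: cvg_id|exact: cvg_cst].
  exact: continuous_comp div_cont (continuous_dev_max0 mu nu (x / lam)).
- by move=> r; rewrite /g fine_ge0 ?opnorm_ge0.
rewrite muleA -EFinM invf_div [_ * (lam / _)]mulrCA mulfV ?mulr1 ?gt_eqF ?subr_gt0 //.
congr (_ * _)%E; apply: eq_integral => x; rewrite inE /= in_itv /= => /andP[x0 _].
rewrite devE; last by rewrite addr_ge0 // divr_ge0 // ltW.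
by rewrite mulrDl [lam * x]mulrC mulfK ?gt_eqF.
Qed.

End rescaled_average.

Theorem lemma3p4 (R : realType) (V E : completeNormedModType R)
  (j : {linear V -> E}) (P : metricType R)
  (A : P -> R -> {linear V -> E}) (Ahat : P -> {linear V -> E}) :
  dense_cont_embedding j ->
  (forall mu t, 0 <= t -> (opnorm (A mu t : V -> E) < +oo)%E) ->
  (forall mu t, 0 <= t -> forall eps : R, 0 < eps -> exists2 delta : R, 0 < delta &
     forall t', 0 <= t' -> `|t' - t| < delta ->
       (opnorm (opdiff (A mu t') (A mu t)) < eps%:E)%E) ->
  (forall mu : P, forall eps : R, 0 < eps ->
     exists T0 : R, exists2 U : set P, nbhs mu U &
       forall T, T0 < T -> forall nu, U nu -> forall h : R, 0 <= h ->
         ((T^-1)%R%:E * \int[(@lebesgue_measure R)]_(t in `[0%R, T]%classic)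
            opnorm (opdiff (A nu (t + h)%R) (Ahat mu)) < eps%:E)%E) ->
  forall (mu : P) (s t : R), 0 <= s -> s <= t ->
  forall eps : R, 0 < eps ->
    exists2 delta : R, 0 < delta & exists2 U : set P, nbhs mu U &
      forall lambda, (0 < lambda < delta)%R -> forall nu, U nu ->
        (\int[(@lebesgue_measure R)]_(r in `[s, t]%classic)
           opnorm (opdiff (A nu (r / lambda)%R) (Ahat mu)) < eps%:E)%E.
Proof.
move=> _ A_bounded A_cont A_avg mu s t s0; rewrite le_eqVlt.
case/predU1P => [<- eps eps0|st eps eps0].
  exists 1 => //; exists setT; first exact: filterT.
  by move=> *; rewrite set_itv1 integral_set1.
have ts_gt0 : 0 < t - s by rewrite subr_gt0.
have [T0 [U Umu avg]] := A_avg mu (eps / (t - s)) (divr_gt0 eps0 ts_gt0).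
have T1_gt0 : 0 < `|T0| + 1 by have := normr_ge0 T0; lra.
exists ((t - s) / (`|T0| + 1)); first by rewrite divr_gt0.
exists U => // lam /andP[lam_gt0 lam_small] nu Unu.
have T0T : T0 < (t - s) / lam.
  move: lam_small; rewrite !ltr_pdivlMr // => lam_small.
  by have := ler_norm T0; nra.
rewrite (integral_dev_rescaled A_bounded A_cont A_avg) //.
apply: (@lt_le_trans _ _ ((t - s)%:E * (eps / (t - s))%:E)%E).
  rewrite lte_pmul2l ?lte_fin //.
  by apply: avg => //; rewrite divr_ge0 // ltW.
by rewrite -EFinM mulrC divfK ?gt_eqF.
Qed.
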